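(* Let $\beta,\beta'\in\mathcal Q(\Phi_+)$ be such that $I_1(\beta)=I_1(\beta')$, $I_2(\beta)\cap I_2(\beta')=\emptyset$, and $a_{i,i'}=0$ for all $i\in I_2(\beta)$, $i'\in I_2(\beta')$. Then there exists $\beta''\in\mathcal Q(\Phi_+)$ with $\beta''^\vee=\beta^\vee+\beta'^\vee-\sum_{i\in I_1(\beta)}\alpha_i^\vee$; equivalently $I_n(\beta'')=I_n(\beta)\cup I_n(\beta')$ for all $n\ge1$.
   Context: Kac–Moody root datum $(A,X,Y,(\alpha_i)_{i\in I},(\alpha_i^\vee)_{i\in I})$, generalized Cartan matrix $A=(a_{i,j})$ with $\langle\alpha_i^\vee,\alpha_j\rangle=a_{i,j}$, simple reflections $r_i$, $W^v=\langle r_i\rangle$, $\Phi=W^v\{\alpha_i\}$, $\Phi_+=\Phi\cap\bigoplus\mathbb Z_{\ge0}\alpha_i$; coroot $\beta^\vee=w(\alpha_i^\vee)$ and $s_\beta=wr_iw^{-1}$ for $\beta=w(\alpha_i)$. For $\beta\in\Phi_+$ write $\beta^\vee=\sum N_i(\beta)\alpha_i^\vee$ and $I_n(\beta)=\{i\in I\mid N_i(\beta)\ge n\}$. $\mathrm{Inv}(w)=\{\alpha\in\Phi_+\mid w\alpha\in\Phi_-\}$; $\beta\in\Phi_+$ is quantum if $\langle\beta^\vee,\gamma\rangle=1$ for all $\gamma\in\mathrm{Inv}(s_\beta)\setminus\{\beta\}$; $\mathcal Q(\Phi_+)$ is the set of quantum roots. *)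

(* Real roots of a Kac-Moody root datum, encoded in the
   formal root lattice Q = (+)_i Z alpha_i and coroot lattice
   Q^v = (+)_i Z alpha_i^v, both represented as {ffun I -> int}. *)
From mathcomp Require Import all_boot all_order all_algebra.
Set Implicit Arguments. Unset Strict Implicit. Unset Printing Implicit Defensive.
Import Order.TTheory GRing.Theory Num.Theory.
Local Open Scope ring_scope.

Section KM.
Variable I : finType.
(* A i j = a_{i,j} = <alpha_i^v, alpha_j> *)
Variable A : I -> I -> int.

Definition is_GCM : Prop :=
  (forall i, A i i = 2) /\
  (forall i j, i != j -> A i j <= 0) /\
  (forall i j, A i j = 0 <-> A j i = 0).

Definition vec := {ffun I -> int}.

(* alpha_i in Q, resp. alpha_i^v in Q^v (same coordinates) *)
Definition sbasis (i : I) : vec := [ffun j => (j == i)%:R].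

(* <u, v> for u in Q^v, v in Q *)
Definition pairing (u v : vec) : int := \sum_(k : I) \sum_(l : I) u k * A k l * v l.

Definition refl (i : I) (v : vec) : vec :=
  [ffun j => v j - pairing (sbasis i) v * sbasis i j].
Definition corefl (i : I) (u : vec) : vec :=
  [ffun j => u j - pairing u (sbasis i) * sbasis i j].

(* an element of W^v given as a word [:: i1; ...; ik] = r_i1 ... r_ik *)
Definition act (w : seq I) (v : vec) : vec := foldr refl v w.
Definition coact (w : seq I) (u : vec) : vec := foldr corefl u w.
Definition conj_word (w : seq I) (i : I) : seq I := w ++ i :: rev w.

Definition is_root (b : vec) : Prop := exists w i, b = act w (sbasis i).
Definition nonneg_vec (v : vec) : Prop := forall j, 0 <= v j.
Definition nonpos_vec (v : vec) : Prop := forall j, v j <= 0.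
Definition pos_root (b : vec) : Prop := is_root b /\ nonneg_vec b.
Definition neg_root (b : vec) : Prop := is_root b /\ nonpos_vec b.

Definition coroot_of (b c : vec) : Prop :=
  exists w i, b = act w (sbasis i) /\ c = coact w (sbasis i).

(* b quantum: b in Phi_+ and for every gamma in Inv(s_b) \ {b},
   <b^v, gamma> = 1, where s_b = w r_i w^{-1}, b^v = w(alpha_i^v)
   for (any) presentation b = w(alpha_i). *)
Definition is_quantum (b : vec) : Prop :=
  pos_root b /\
  forall w i, b = act w (sbasis i) ->
    forall g, pos_root g -> neg_root (act (conj_word w i) g) -> g <> b ->
      pairing (coact w (sbasis i)) g = 1.

(* I_n(b) computed from the coroot coordinates c = b^v *)
Definition In_set (n : nat) (c : vec) : {set I} := [set i | (n%:Z <= c i)%R].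

End KM.

(* Every real root is, together with its coroot, either positive or negative (Tits' lemma,
   proved through Humphreys' reduction to rank 2). With this, quantum roots are described by
   their coroots: [b] is quantum iff [b^v] arises from a simple coroot by a chain of
   reflections [r_k], each applied to some [x] with [<x, alpha_k> = -1] ([qcoroot]). Indeed,
   descending from a quantum [b] along any [r_k] with [<b^v, alpha_k> > 0], the quantum
   condition tested at [alpha_k] forces this pairing to be 1, and [r_k b] is again quantum.
   Given two such chains for [c = beta^v] and [c' = beta'^v], peel off the steps of [c] that
   raise a coordinate to [>= 2]; they are orthogonal to everything coming from [c'] (as
   [a_{i,i'} = 0] on [I_2(beta) x I_2(beta')]) and can be replayed on top of [c'], while what
   remains of [c] is the indicator of [I_1(beta) = I_1(beta')], already present in [c']. *)

From mathcomp Require Import all_boot all_order all_algebra.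
From mathcomp Require Import zify ring boolp.
Set Implicit Arguments. Unset Strict Implicit. Unset Printing Implicit Defensive.
Import Order.TTheory GRing.Theory Num.Theory.
Local Open Scope ring_scope.

Section Reflections.
Variable I : finType.
Implicit Types (M : I -> I -> int) (u v : vec I) (w : seq I) (i j k a : I).

Definition tr_gcm M : I -> I -> int := fun i j => M j i.

Definition lincomb (x : int) u (y : int) v : vec I := [ffun j => x * u j + y * v j].

Lemma lincombE x u y v j : lincomb x u y v j = x * u j + y * v j.
Proof. by rewrite ffunE. Qed.

Lemma oppv_lincomb v : - v = lincomb (-1) v 0 v.
Proof. by apply/ffunP => j; rewrite !ffunE; ring. Qed.

Lemma sbasisE i j : sbasis i j = (j == i)%:R.
Proof. by rewrite ffunE. Qed.

Lemma sum_mul_delta (F : I -> int) i : \sum_l F l * (l == i)%:R = F i.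
Proof.
rewrite (bigD1 i) //= eqxx mulr1 big1 ?addr0 // => l /negbTE ->; by rewrite mulr0.
Qed.

Lemma sum_supported (F : I -> int) k : (forall l, l != k -> F l = 0) -> \sum_l F l = F k.
Proof. by move=> h; rewrite (bigD1 k) //= big1 ?addr0. Qed.

Lemma sum_mul_sbasis M i k : \sum_l M i l * sbasis k l = M i k.
Proof. by under eq_bigr => l _ do rewrite sbasisE; rewrite sum_mul_delta. Qed.

Lemma pairingE M u v : pairing M u v = \sum_k u k * (\sum_l M k l * v l).
Proof.
by apply: eq_bigr => k _; rewrite mulr_sumr; apply: eq_bigr => l _; rewrite mulrA.
Qed.

Lemma pairing_sbasisl M i v : pairing M (sbasis i) v = \sum_l M i l * v l.
Proof.
rewrite /pairing (bigD1 i) //= [X in _ + X]big1 ?addr0.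
  by apply: eq_bigr => l _; rewrite sbasisE eqxx mul1r.
by move=> k /negbTE nk; rewrite big1 // => l _; rewrite sbasisE nk !mul0r.
Qed.

Lemma pairing_sbasisr M u i : pairing M u (sbasis i) = \sum_k u k * M k i.
Proof.
rewrite /pairing; apply: eq_bigr => k _.
rewrite (bigD1 i) //= big1 ?addr0; first by rewrite sbasisE eqxx mulr1.
by move=> l /negbTE nl; rewrite sbasisE nl mulr0.
Qed.

Lemma pairing_sum_sbasisr M u v : pairing M u v = \sum_l v l * pairing M u (sbasis l).
Proof.
under [RHS]eq_bigr => l _ do rewrite pairing_sbasisr mulr_sumr.
rewrite /pairing [RHS]exchange_big; apply: eq_bigr => k _; apply: eq_bigr => l _; ring.
Qed.

Lemma pairing_tr M u v : pairing (tr_gcm M) u v = pairing M v u.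
Proof.
rewrite /pairing [RHS]exchange_big; apply: eq_bigr => k _; apply: eq_bigr => l _.
rewrite /tr_gcm; ring.
Qed.

Lemma sum_mul_lincomb M i x u y v :
  \sum_l M i l * lincomb x u y v l = x * (\sum_l M i l * u l) + y * (\sum_l M i l * v l).
Proof.
by rewrite !mulr_sumr -big_split /=; apply: eq_bigr => l _; rewrite ffunE; ring.
Qed.

Lemma pairing_lincombr M u x v1 y v2 :
  pairing M u (lincomb x v1 y v2) = x * pairing M u v1 + y * pairing M u v2.
Proof.
rewrite !pairingE; under eq_bigr => k _ do rewrite sum_mul_lincomb.
by rewrite !mulr_sumr -big_split /=; apply: eq_bigr => k _; ring.
Qed.

Lemma pairingNr M u v : pairing M u (- v) = - pairing M u v.
Proof. by rewrite oppv_lincomb pairing_lincombr; ring. Qed.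

Lemma corefl_tr M i u : corefl M i u = refl (tr_gcm M) i u.
Proof. by apply/ffunP => j; rewrite !ffunE pairing_tr. Qed.

Lemma coact_tr M w u : coact M w u = act (tr_gcm M) w u.
Proof. by elim: w => //= a w IH; rewrite IH corefl_tr. Qed.

Lemma reflE M i v j : refl M i v j = v j - (\sum_l M i l * v l) * (j == i)%:R.
Proof. by rewrite ffunE pairing_sbasisl sbasisE. Qed.

Lemma coreflE M k u j : corefl M k u j = u j - pairing M u (sbasis k) * (j == k)%:R.
Proof. by rewrite ffunE sbasisE. Qed.

Lemma refl_lincomb M i x u y v :
  refl M i (lincomb x u y v) = lincomb x (refl M i u) y (refl M i v).
Proof. by apply/ffunP => j; rewrite reflE sum_mul_lincomb !ffunE !pairing_sbasisl; ring. Qed.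

Lemma act_lincomb M w x u y v :
  act M w (lincomb x u y v) = lincomb x (act M w u) y (act M w v).
Proof. by elim: w => //= a w IH; rewrite IH refl_lincomb. Qed.

Lemma act_oppv M w v : act M w (- v) = - act M w v.
Proof. by rewrite oppv_lincomb act_lincomb -oppv_lincomb. Qed.

Lemma coact_oppv M w u : coact M w (- u) = - coact M w u.
Proof. by rewrite !coact_tr act_oppv. Qed.

Lemma act_cat M w1 w2 v : act M (w1 ++ w2) v = act M w1 (act M w2 v).
Proof. by rewrite /act foldr_cat. Qed.

Lemma coact_cat M w1 w2 u : coact M (w1 ++ w2) u = coact M w1 (coact M w2 u).
Proof. by rewrite /coact foldr_cat. Qed.

Lemma act_rcons M w a v : act M (rcons w a) v = act M w (refl M a v).
Proof. by rewrite -cats1 act_cat. Qed.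

Lemma refl0 M k : refl M k (0 : vec I) = 0.
Proof.
by apply/ffunP => j; rewrite reflE !ffunE big1 ?mul0r ?subr0 // => l _; rewrite ffunE mulr0.
Qed.

Lemma act0 M w : act M w (0 : vec I) = 0.
Proof. by elim: w => //= a w ->; rewrite refl0. Qed.

Lemma sum_mul_refl M i v k :
  \sum_l M k l * refl M i v l = \sum_l M k l * v l - (\sum_l M i l * v l) * M k i.
Proof.
rewrite (eq_bigr (fun l => M k l * v l - ((\sum_l M i l * v l) * M k l) * (l == i)%:R)).
  by rewrite sumrB sum_mul_delta.
by move=> l _; rewrite reflE; ring.
Qed.

Lemma pairing_corefl M u k m :
  pairing M (corefl M k u) (sbasis m) = pairing M u (sbasis m) - pairing M u (sbasis k) * M k m.
Proof.
rewrite [LHS]pairing_sbasisr [pairing M u (sbasis m)]pairing_sbasisr.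
rewrite (eq_bigr (fun l => u l * M l m - (pairing M u (sbasis k) * M l m) * (l == k)%:R)).
  by rewrite sumrB sum_mul_delta.
by move=> l _; rewrite coreflE; ring.
Qed.

Lemma corefl_comm M k l u : M k l = 0 -> M l k = 0 ->
  corefl M k (corefl M l u) = corefl M l (corefl M k u).
Proof. by move=> hkl hlk; apply/ffunP => j; rewrite !coreflE !pairing_corefl hkl hlk; ring. Qed.

Section DiagonalTwo.
Variable M : I -> I -> int.
Hypothesis M2 : forall i, M i i = 2.

Lemma reflK i : involutive (refl M i).
Proof. by move=> v; apply/ffunP => j; rewrite reflE sum_mul_refl M2 reflE; ring. Qed.

Lemma refl_sbasis i : refl M i (sbasis i) = - sbasis i.
Proof. by apply/ffunP => j; rewrite reflE !ffunE sum_mul_sbasis M2; ring. Qed.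

Lemma pairing_corefl_sbasis u k : pairing M (corefl M k u) (sbasis k) = - pairing M u (sbasis k).
Proof. by rewrite pairing_corefl M2; ring. Qed.

Lemma act_revK w v : act M (rev w) (act M w v) = v.
Proof. by elim: w v => //= a w IH v; rewrite rev_cons act_rcons reflK IH. Qed.

Lemma pairing_corefl_refl i u v : pairing M (corefl M i u) (refl M i v) = pairing M u v.
Proof.
rewrite !pairingE.
set P := \sum_l M i l * v l; set Q := \sum_k u k * M k i.
rewrite (eq_bigr (fun k => u k * (\sum_l M k l * v l) - P * (u k * M k i)
   - (Q * ((\sum_l M k l * v l) - P * M k i)) * (k == i)%:R)).
  by rewrite !sumrB sum_mul_delta -mulr_sumr -/Q M2 /P; ring.
by move=> k _; rewrite sum_mul_refl ffunE pairing_sbasisr sbasisE -/P -/Q; ring.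
Qed.

Lemma pairing_refl i u v : pairing M u (refl M i v) = pairing M (corefl M i u) v.
Proof. by rewrite -{2}(reflK i v) pairing_corefl_refl. Qed.

Lemma pairing_coact_act w u v : pairing M (coact M w u) (act M w v) = pairing M u v.
Proof. by elim: w => //= a w IH; rewrite pairing_corefl_refl. Qed.

Lemma conj_word_cons a w i : conj_word (a :: w) i = a :: rcons (conj_word w i) a.
Proof. by rewrite /conj_word /= rev_cons -rcons_cons rcons_cat. Qed.

Lemma act_conj_word_cons k w i v :
  act M (conj_word (k :: w) i) v = refl M k (act M (conj_word w i) (refl M k v)).
Proof. by rewrite conj_word_cons /= act_rcons. Qed.

Lemma act_conj_word w i v :
  act M (conj_word w i) v =
  lincomb 1 v (- pairing M (coact M w (sbasis i)) v) (act M w (sbasis i)).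
Proof.
elim: w v => [|a w IH] v; first by apply/ffunP => j; rewrite /= !ffunE; ring.
by rewrite act_conj_word_cons IH refl_lincomb reflK pairing_refl.
Qed.

Lemma act_conj_wordK w i : involutive (act M (conj_word w i)).
Proof.
move=> v; have e : rev (conj_word w i) = conj_word w i.
  by rewrite /conj_word rev_cat rev_cons revK cat_rcons.
by rewrite -{1}e act_revK.
Qed.

End DiagonalTwo.

Lemma coreflK M k : (forall i, M i i = 2) -> involutive (corefl M k).
Proof. by move=> M2 u; rewrite !corefl_tr (@reflK (tr_gcm M)). Qed.

Lemma corefl_sbasis M i : (forall i, M i i = 2) -> corefl M i (sbasis i) = - sbasis i.
Proof. by move=> M2; rewrite corefl_tr (@refl_sbasis (tr_gcm M)). Qed.

Lemma coact_revK M w u : (forall i, M i i = 2) -> coact M (rev w) (coact M w u) = u.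
Proof. by move=> M2; rewrite !coact_tr (@act_revK (tr_gcm M)). Qed.

Lemma coact_revKV M w u : (forall i, M i i = 2) -> coact M w (coact M (rev w) u) = u.
Proof. by move=> M2; rewrite -{1}(revK w) coact_revK. Qed.

End Reflections.

Section WordLength.
Variable I : finType.
Variable M : I -> I -> int.
Hypothesis M2 : forall i, M i i = 2.
Implicit Types (w x y : seq I) (i : I).

(* Equality in W^v, read off from the actions on the root and coroot lattices. *)
Definition weqv w1 w2 : Prop :=
  (forall v, act M w1 v = act M w2 v) /\ (forall u, coact M w1 u = coact M w2 u).

Lemma weqv_refl w : weqv w w. Proof. by []. Qed.

Lemma weqv_sym w1 w2 : weqv w1 w2 -> weqv w2 w1.
Proof. by case=> h1 h2; split=> v; rewrite ?h1 ?h2. Qed.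

Lemma weqv_trans w1 w2 w3 : weqv w1 w2 -> weqv w2 w3 -> weqv w1 w3.
Proof. by case=> h1 h2 [h3 h4]; split=> v; rewrite ?h1 ?h2 ?h3 ?h4. Qed.

Lemma weqv_catl x w1 w2 : weqv w1 w2 -> weqv (x ++ w1) (x ++ w2).
Proof. by case=> h1 h2; split=> v; rewrite ?act_cat ?coact_cat ?h1 ?h2. Qed.

Lemma weqv_catr x w1 w2 : weqv w1 w2 -> weqv (w1 ++ x) (w2 ++ x).
Proof. by case=> h1 h2; split=> v; rewrite ?act_cat ?coact_cat ?h1 ?h2. Qed.

Lemma weqv_cancel x i y : weqv (x ++ i :: i :: y) (x ++ y).
Proof.
apply: weqv_catl; rewrite -[y]cat0s -cat_cons -cat_cons; apply: weqv_catr.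
by split=> v /=; rewrite ?reflK ?coreflK.
Qed.

Lemma exists_weqv_size w : exists n, `[< exists2 w', weqv w' w & size w' = n >].
Proof. by exists (size w); apply/asboolP; exists w. Qed.

Definition wlen w : nat := ex_minn (exists_weqv_size w).

Lemma wlen_spec w : exists2 w', weqv w' w & size w' = wlen w.
Proof. by rewrite /wlen; case: ex_minnP => n /asboolP. Qed.

Lemma wlen_min w w' : weqv w' w -> (wlen w <= size w')%N.
Proof. by move=> e; rewrite /wlen; case: ex_minnP => n _; apply; apply/asboolP; exists w'. Qed.

Lemma wlen_size w : (wlen w <= size w)%N.
Proof. exact: wlen_min (weqv_refl w). Qed.

Lemma wlen_weqv w1 w2 : weqv w1 w2 -> wlen w1 = wlen w2.
Proof.
move=> e; apply/eqP; rewrite eqn_leq; apply/andP; split.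
  by case: (wlen_spec w2) => w' e' <-; apply: wlen_min; exact: weqv_trans e' (weqv_sym e).
by case: (wlen_spec w1) => w' e' <-; apply: wlen_min; exact: weqv_trans e' e.
Qed.

Lemma wlen_cat x y : (wlen (x ++ y) <= wlen x + wlen y)%N.
Proof.
case: (wlen_spec x) => x' ex <-; case: (wlen_spec y) => y' ey <-.
rewrite -size_cat; apply: wlen_min.
exact: weqv_trans (weqv_catr _ ex) (weqv_catl _ ey).
Qed.

Lemma wlen_eq0 w : wlen w = 0%N -> weqv w [::].
Proof.
move=> h; case: (wlen_spec w) => w' e; rewrite h => /size0nil w'0.
by rewrite w'0 in e; exact: weqv_sym.
Qed.

End WordLength.

Lemma weqv_tr (I : finType) (M : I -> I -> int) w1 w2 : weqv M w1 w2 -> weqv (tr_gcm M) w1 w2.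
Proof. by case=> h1 h2; split=> v; [rewrite -!coact_tr h2 | rewrite !coact_tr; exact: h1]. Qed.

Definition rank2_step (a b ps pt : int) (c : bool) (XY : int * int) : int * int :=
  if c then (- XY.1 - ps - a * XY.2, XY.2) else (XY.1, - XY.2 - pt - b * XY.1).

Definition rank2_coords a b ps pt (bw : seq bool) := foldr (rank2_step a b ps pt) (0, 0) bw.

Fixpoint alt_word (n : nat) : seq bool := if n is n'.+1 then odd n' :: alt_word n' else [::].
Fixpoint alt_word' (n : nat) : seq bool :=
  if n is n'.+1 then ~~ odd n' :: alt_word' n' else [::].

(* The order m_st of r_s r_t, for a_st a_ts = 0, 1, 2, 3. *)
Definition braid_len (a b : int) : nat :=
  if a * b == 0 then 2 else if a * b == 1 then 3 else if a * b == 2 then 4 else 6.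

Lemma finite_rank2_entries (a b : int) : a <= 0 -> b <= 0 -> (a == 0) = (b == 0) ->
  a * b <= 3 -> a \in [:: 0; -1; -2; -3] /\ b \in [:: 0; -1; -2; -3].
Proof.
move=> ha hb hab h3; rewrite !inE.
by case: (a =P 0) hab => [-> /esym/eqP -> //|a0 /esym/eqP b0]; split; lia.
Qed.

Lemma rank2_coords_braid a b ps pt : a <= 0 -> b <= 0 -> (a == 0) = (b == 0) ->
  a * b <= 3 ->
  rank2_coords a b ps pt (alt_word (braid_len a b)) =
  rank2_coords a b ps pt (alt_word' (braid_len a b)).
Proof.
move=> ha hb hab h3; case: (finite_rank2_entries ha hb hab h3).
rewrite !inE => /or4P [] /eqP ea /or4P [] /eqP eb; subst a b => //;
  rewrite /braid_len /rank2_coords /=; congr pair; ring.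
Qed.

Lemma rank2_coords_ge0_finite a b L : a <= 0 -> b <= 0 -> (a == 0) = (b == 0) ->
  a * b <= 3 -> (L < braid_len a b)%N ->
  0 <= 1 + (rank2_coords a b 2 b (alt_word L)).1 /\
  0 <= (rank2_coords a b 2 b (alt_word L)).2.
Proof.
move=> ha hb hab h3; case: (finite_rank2_entries ha hb hab h3).
rewrite !inE => /or4P [] /eqP ea /or4P [] /eqP eb; subst a b => //;
  rewrite /braid_len /=; do 6? (case: L => [|L] //=); rewrite /rank2_coords /=; lia.
Qed.

(* The third component is the invariant that makes the induction go through. *)
Lemma rank2_coords_ge0_infinite a b L : a <= 0 -> b <= 0 -> 4 <= a * b ->
  let X := (rank2_coords a b 2 b (alt_word L)).1 in
  let Y := (rank2_coords a b 2 b (alt_word L)).2 in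
  [/\ 0 <= 1 + X, 0 <= Y &
      if odd L then 2 * (1 + X) <= - a * Y else 2 * Y <= - b * (1 + X)].
Proof.
move=> ha hb h4; elim: L => [|L [IH1 IH2 IH3]]; first by rewrite /rank2_coords /=; split; lia.
rewrite /rank2_coords /= -/(rank2_coords a b 2 b (alt_word L)).
move: IH1 IH2 IH3.
set X := (rank2_coords a b 2 b (alt_word L)).1; set Y := (rank2_coords a b 2 b (alt_word L)).2.
by case: (odd L) => /= IH1 IH2 IH3; split; nia.
Qed.

Lemma size_alt_word n : size (alt_word n) = n.
Proof. by elim: n => //= n ->. Qed.

Lemma alt_word_suffix m k : exists pre, alt_word (k + m) = pre ++ alt_word m.
Proof.
elim: k => [|k [pre IH]]; first by exists [::].
by exists (odd (k + m) :: pre); rewrite addSn /= IH.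
Qed.

Lemma alt_word'_rcons n : exists2 z, alt_word' n.+1 = rcons z true & size z = n.
Proof.
elim: n => [|n [z IH sz]]; first by exists [::].
by exists (~~ odd n.+1 :: z); rewrite /= ?sz // -IH.
Qed.

Lemma alternating_alt_word bw : sorted (fun x y : bool => x != y) bw ->
  last false bw = false -> bw = alt_word (size bw).
Proof.
elim: bw => // c bw IH /= hp hl.
case: bw IH hp hl => [|c' bw] IH hp hl; first by move: hl => /= ->.
have e := IH (path_sorted hp) hl.
move: e hp; set n := size (c' :: bw) => e; rewrite e /= => /andP [hc _].
by congr cons; move: hc; rewrite /n /=; clear hl; case: c; case: (odd (size bw)).
Qed.

Lemma not_alternating_repeat bw : ~~ sorted (fun x y : bool => x != y) bw ->
  exists p c q, bw = p ++ c :: c :: q.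
Proof.
elim: bw => // c bw IH /=.
case: bw IH => // c' bw IH /= /nandP [/negPn/eqP ->|h]; first by exists [::], c', bw.
by case: (IH h) => p [d [q e]]; exists (c :: p), d, q; rewrite e.
Qed.

Definition letter (I : Type) (s t : I) (c : bool) : I := if c then s else t.

Section Rank2Action.
Variable I : finType.
Variable M : I -> I -> int.
Hypothesis M2 : forall i, M i i = 2.
Variables s t : I.

Lemma sum_mul_shift2 i (v : vec I) X Y :
  \sum_l M i l * (v l + X * (l == s)%:R + Y * (l == t)%:R) =
  \sum_l M i l * v l + X * M i s + Y * M i t.
Proof.
rewrite (eq_bigr (fun l => M i l * v l + (X * M i l) * (l == s)%:R
                            + (Y * M i l) * (l == t)%:R)).
  by rewrite !big_split /= !sum_mul_delta.
by move=> l _; ring.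
Qed.

Lemma act_rank2 bw (v : vec I) :
  let XY := rank2_coords (M s t) (M t s) (\sum_l M s l * v l) (\sum_l M t l * v l) bw in
  act M (map (letter s t) bw) v = [ffun j => v j + XY.1 * (j == s)%:R + XY.2 * (j == t)%:R].
Proof.
elim: bw => [|c bw IH]; first by apply/ffunP => j; rewrite /= !ffunE; ring.
rewrite /= IH; apply/ffunP => j; rewrite reflE !ffunE.
set X := (rank2_coords _ _ _ _ bw).1; set Y := (rank2_coords _ _ _ _ bw).2.
rewrite (eq_bigr (fun l => M (letter s t c) l * (v l + X * (l == s)%:R + Y * (l == t)%:R)));
  last by move=> l _; rewrite ffunE.
by rewrite sum_mul_shift2 /rank2_step; case: c => /=; rewrite M2; ring.
Qed.

End Rank2Action.

Lemma is_GCM_tr (I : finType) (M : I -> I -> int) : is_GCM M -> is_GCM (tr_gcm M).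
Proof.
case=> [h1 [h2 h3]]; split; first exact: h1.
split; first by move=> i j ij; apply: h2; rewrite eq_sym.
by move=> i j; split => /h3.
Qed.

Section Rank2.
Variable I : finType.
Variable M : I -> I -> int.
Hypothesis hG : is_GCM M.
Variables s t : I.
Hypothesis hst : s != t.

Let M2 : forall i, M i i = 2. Proof. by case: hG. Qed.
Let Mst_le0 : M s t <= 0. Proof. by case: hG => _ [hn _]; apply: hn. Qed.
Let Mts_le0 : M t s <= 0. Proof. by case: hG => _ [hn _]; apply: hn; rewrite eq_sym. Qed.
Let Mst_eq0 : (M s t == 0) = (M t s == 0).
Proof. by case: hG => _ [_ hz]; apply/eqP/eqP => /hz. Qed.

Local Notation word := (map (letter s t)).

Lemma braid_weqv : M s t * M t s <= 3 ->
  weqv M (word (alt_word (braid_len (M s t) (M t s))))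
         (word (alt_word' (braid_len (M s t) (M t s)))).
Proof.
move=> h3; split=> v; first by rewrite !act_rank2 // rank2_coords_braid.
rewrite !coact_tr !act_rank2 //= /tr_gcm.
by rewrite /braid_len mulrC -/(braid_len (M t s) (M s t)) rank2_coords_braid // mulrC.
Qed.

(* [true] encodes [r_s]: [bw] is reduced and [l(bw r_s) >= l(bw)]. *)
Definition rank2_minimal (bw : seq bool) : Prop :=
  (forall bw', weqv M (word bw') (word bw) -> (size bw <= size bw')%N) /\
  (forall bz, weqv M (word bz) (word (rcons bw true)) -> (size bw <= size bz)%N).

Lemma rank2_minimal_alt_word bw : rank2_minimal bw -> bw = alt_word (size bw).
Proof.
case=> R1 R2; apply: alternating_alt_word.
  apply/negPn/negP => /not_alternating_repeat [p [c [q e]]].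
  have h : weqv M (word (p ++ q)) (word bw).
    by rewrite e !map_cat /=; apply: weqv_sym; exact: weqv_cancel.
  by move: (R1 _ h); rewrite e !size_cat /=; lia.
case E: (last false bw) => //; move: E R2; clear R1.
case/lastP: bw => [//|p c]; rewrite last_rcons => -> R2.
have h : weqv M (word p) (word (rcons (rcons p true) true)).
  rewrite !map_rcons -!cats1 -catA /=; apply: weqv_sym.
  by rewrite -[word p in X in weqv _ _ X]cats0; exact: weqv_cancel.
by move: (R2 _ h); rewrite size_rcons; lia.
Qed.

(* Otherwise the braid relation would shorten [alt_word L ++ [:: true]]. *)
Lemma rank2_minimal_size_lt L : M s t * M t s <= 3 -> rank2_minimal (alt_word L) ->
  (L < braid_len (M s t) (M t s))%N.
Proof.
move=> h3 [_ R2]; rewrite ltnNge; apply/negP.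
set m := braid_len _ _ => hm.
have m_gt0 : (0 < m)%N by rewrite /m /braid_len; repeat case: ifP.
case: (alt_word_suffix m (L - m)) => pre; rewrite subnK // => epre.
case: (alt_word'_rcons m.-1) => z; rewrite prednK // => ez sz.
have h : weqv M (word (pre ++ z)) (word (rcons (alt_word L) true)).
  rewrite epre -cats1 !map_cat -catA.
  apply: weqv_sym; apply: weqv_trans (weqv_catl _ (weqv_catr _ (braid_weqv h3))) _.
  rewrite -/m ez map_rcons -cats1 -catA /= catA.
  by rewrite -[_ ++ word z in X in weqv _ _ X]cats0; exact: weqv_cancel.
move: (R2 _ h); rewrite size_cat sz epre size_cat !size_alt_word -(ltn_predK m_gt0); lia.
Qed.

Lemma rank2_minimal_root_ge0 bw : rank2_minimal bw ->
  exists x y, [/\ 0 <= x, 0 <= y & act M (word bw) (sbasis s) = lincomb x (sbasis s) y (sbasis t)].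
Proof.
move=> min_bw; have eL := rank2_minimal_alt_word min_bw.
rewrite act_rank2 // !sum_mul_sbasis M2.
set X := (rank2_coords _ _ _ _ _).1; set Y := (rank2_coords _ _ _ _ _).2.
exists (1 + X), Y; suff [hx hy] : 0 <= 1 + X /\ 0 <= Y.
  by split => //; apply/ffunP => j; rewrite !ffunE; ring.
rewrite /X /Y eL; have [h4|h3] := leP 4 (M s t * M t s).
  by case: (rank2_coords_ge0_infinite (size bw) Mst_le0 Mts_le0 h4).
have {}h3 : M s t * M t s <= 3 by lia.
apply: rank2_coords_ge0_finite => //; apply: rank2_minimal_size_lt => //.
by rewrite -eL.
Qed.

End Rank2.

Section ParabolicDecomposition.
Variable I : finType.
Variable M : I -> I -> int.
Hypothesis M2 : forall i, M i i = 2.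
Variables s t : I.
Local Notation word := (map (letter s t)).
Local Notation wlen := (wlen M).
Local Notation weqv := (weqv M).

Lemma wlen_cat_word v bu : (wlen (v ++ word bu) <= wlen v + size bu)%N.
Proof.
apply: leq_trans (wlen_cat _ _ _) _; rewrite leq_add2l.
by apply: leq_trans (wlen_size _ _) _; rewrite size_map.
Qed.

(* Move letters from [v0] into the rank-2 part as long as this shortens [v0]. *)
Lemma parabolic_decomposition w v0 bu0 :
  weqv (v0 ++ word bu0) w -> (wlen v0 + size bu0 <= wlen w)%N ->
  exists v bu, [/\ weqv (v ++ word bu) w, wlen v + size bu = wlen w, (wlen v <= wlen v0)%N
                 & forall c, (wlen v <= wlen (rcons v (letter s t c)))%N].
Proof.
have [n lt_v0] := ubnP (wlen v0); elim: n => // n IH in v0 bu0 lt_v0 *.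
move=> e hsz; case: (boolP [forall c : bool, (wlen v0 <= wlen (rcons v0 (letter s t c)))%N]).
  move/forallP => hstep; exists v0, bu0; split => //.
  by apply/eqP; rewrite eqn_leq hsz -(wlen_weqv e) wlen_cat_word.
case/forallPn => c; rewrite -ltnNge => lt_c.
have e' : weqv (rcons v0 (letter s t c) ++ word (c :: bu0)) w.
  by apply: weqv_trans e; rewrite -cats1 -catA; exact: weqv_cancel.
have lt' : (wlen (rcons v0 (letter s t c)) < n)%N by apply: leq_trans lt_c _; rewrite -ltnS.
have hsz' : (wlen (rcons v0 (letter s t c)) + size (c :: bu0) <= wlen w)%N.
  by move: hsz => /=; lia.
have [v [bu [? ? le_v ?]]] := IH _ _ lt' e' hsz'.
by exists v, bu; split => //; apply: leq_trans le_v (ltnW lt_c).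
Qed.

End ParabolicDecomposition.

Section Positivity.
Variable I : finType.
Variable A : I -> I -> int.
Hypothesis hG : is_GCM A.
Let A2 : forall i, A i i = 2. Proof. by case: hG. Qed.
Local Notation wlen := (wlen A).
Local Notation weqv := (weqv A).
Implicit Types (w : seq I) (i s t : I).

Lemma nonneg_lincomb x y (u v : vec I) : 0 <= x -> 0 <= y -> nonneg_vec u -> nonneg_vec v ->
  nonneg_vec (lincomb x u y v).
Proof. by move=> hx hy hu hv j; rewrite ffunE addr_ge0 // mulr_ge0. Qed.

Lemma nonneg_sbasis i : nonneg_vec (sbasis i).
Proof. by move=> j; rewrite sbasisE; case: (j == i). Qed.

Lemma reduced_rcons_neq w s n : wlen w = n.+1 -> (wlen w <= wlen (rcons w s))%N ->
  exists w1 t, [/\ weqv (rcons w1 t) w, size w1 = n & t != s].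
Proof.
move=> hw hs; case: (wlen_spec A w) => w0 e0; rewrite hw.
case/lastP: w0 e0 => [//|w1 t] e0; rewrite size_rcons => -[sz1].
exists w1, t; split => //; apply/eqP => ets; rewrite ets in e0.
have e : weqv (rcons w s) w1.
  rewrite -cats1; apply: weqv_trans (weqv_catr [:: s] (weqv_sym e0)) _.
  by rewrite -cats1 -catA /= -[w1 in X in weqv _ X]cats0; exact: weqv_cancel.
by move: (wlen_min (weqv_sym e)) hs; rewrite sz1 hw; lia.
Qed.

(* Tits' lemma: l(w r_s) >= l(w) forces w(alpha_s) >= 0.  Following Humphreys, one splits
   w = v u with u in the rank-2 parabolic subgroup <r_s, r_t> (t the last letter of a
   reduced word for w) and v as short as possible; induction applies to v, and a direct
   rank-2 computation to u. *)
Theorem act_sbasis_ge0 w s : (wlen w <= wlen (rcons w s))%N ->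
  nonneg_vec (act A w (sbasis s)) /\ nonneg_vec (coact A w (sbasis s)).
Proof.
have [n lt_w] := ubnP (wlen w); elim: n => // n IH in w s lt_w *.
move=> hs; case hw: (wlen w) => [|m].
  by case: (wlen_eq0 hw) => e1 e2; rewrite e1 e2; split; exact: nonneg_sbasis.
have [w1 [t [e1 sz1 ts]]] := reduced_rcons_neq hw hs.
have st : s != t by rewrite eq_sym.
have e0 : weqv (w1 ++ map (letter s t) [:: false]) w by rewrite /= cats1.
have hsz0 : (wlen w1 + size [:: false] <= wlen w)%N.
  by move: (wlen_size A w1); rewrite sz1 hw /= addn1.
have [v [bu [ev hsz le_v hstep]]] := parabolic_decomposition A2 e0 hsz0.
have lt_v : (wlen v < n)%N by move: (wlen_size A w1) lt_w; rewrite sz1 hw; lia.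
have [IHs1 IHs2] := IH v s lt_v (hstep true).
have [IHt1 IHt2] := IH v t lt_v (hstep false).
have hlow v' bu' : weqv (v' ++ map (letter s t) bu') w -> (wlen w <= wlen v' + size bu')%N.
  by move=> e; rewrite -(wlen_weqv e) wlen_cat_word.
have min_bu : rank2_minimal A s t bu.
  split=> [bw' e|bz e]; first by have := hlow v bw' (weqv_trans (weqv_catl v e) ev); lia.
  have e2 : weqv (rcons w s) (v ++ map (letter s t) bz).
    rewrite -cats1; apply: weqv_trans (weqv_catr [:: s] (weqv_sym ev)) _.
    rewrite -catA; apply: weqv_catl; apply: weqv_trans _ (weqv_sym e).
    by rewrite map_rcons cats1; exact: weqv_refl.
  by have := leq_trans hs (leq_trans (eq_leq (wlen_weqv e2)) (wlen_cat_word A s t v bz)); lia.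
have min_bu' : rank2_minimal (tr_gcm A) s t bu.
  by case: min_bu => R1 R2; split=> ? /weqv_tr; [exact: R1 | exact: R2].
have [x [y [hx hy ex]]] := rank2_minimal_root_ge0 hG st min_bu.
have [x' [y' [hx' hy' ex']]] := rank2_minimal_root_ge0 (is_GCM_tr hG) st min_bu'.
case: ev => ev1 ev2; split.
  by rewrite -ev1 act_cat ex act_lincomb; apply: nonneg_lincomb.
rewrite -ev2 coact_cat [coact A (map _ bu) _]coact_tr ex' !coact_tr act_lincomb -!coact_tr.
exact: nonneg_lincomb.
Qed.

Theorem root_sign w i :
  (nonneg_vec (act A w (sbasis i)) /\ nonneg_vec (coact A w (sbasis i))) \/
  (nonpos_vec (act A w (sbasis i)) /\ nonpos_vec (coact A w (sbasis i))).
Proof.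
case: (leqP (wlen w) (wlen (rcons w i))) => h; first by left; exact: act_sbasis_ge0.
right; have e : weqv (rcons (rcons w i) i) w.
  by rewrite -!cats1 -catA /= -[w in X in weqv _ X]cats0; exact: weqv_cancel.
have [n1 n2] := act_sbasis_ge0 (leq_trans (ltnW h) (eq_leq (esym (wlen_weqv e)))).
move: n1 n2; rewrite act_rcons refl_sbasis // act_oppv.
rewrite -cats1 coact_cat /= corefl_sbasis // coact_oppv => n1 n2.
by split=> j; [move: (n1 j) | move: (n2 j)]; rewrite ffunE oppr_ge0.
Qed.

End Positivity.

Section Roots.
Variable I : finType.
Variable A : I -> I -> int.
Hypothesis hG : is_GCM A.
Implicit Types (u v g h : vec I) (w : seq I) (i j k l : I).
Let A2 : forall i, A i i = 2. Proof. by case: hG. Qed.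

Lemma pairing_coroot_root w i : pairing A (coact A w (sbasis i)) (act A w (sbasis i)) = 2.
Proof. by rewrite pairing_coact_act // pairing_sbasisl sum_mul_sbasis. Qed.

Lemma vec_ge0_le0_eq0 v : nonneg_vec v -> nonpos_vec v -> v = 0.
Proof. by move=> h1 h2; apply/ffunP => j; rewrite ffunE; have := h1 j; have := h2 j; lia. Qed.

Lemma root_neq0 w i : act A w (sbasis i) != 0.
Proof.
apply/negP => /eqP e; have := act_revK A2 w (sbasis i).
by rewrite e act0 => /ffunP /(_ i); rewrite !ffunE eqxx.
Qed.

Lemma coroot_neq0 w i : coact A w (sbasis i) != 0.
Proof.
apply/negP => /eqP e; have := coact_revK w (sbasis i) A2.
by rewrite e coact_tr act0 => /ffunP /(_ i); rewrite !ffunE eqxx.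
Qed.

Lemma coroot_ge0 w i : nonneg_vec (act A w (sbasis i)) -> nonneg_vec (coact A w (sbasis i)).
Proof.
move=> h; case: (root_sign hG w i) => [[] //|[h1 _]].
by move: (root_neq0 w i); rewrite (vec_ge0_le0_eq0 h h1) eqxx.
Qed.

Lemma coroot_le0 w i : nonpos_vec (act A w (sbasis i)) -> nonpos_vec (coact A w (sbasis i)).
Proof.
move=> h; case: (root_sign hG w i) => [[h1 _]|[] //].
by move: (root_neq0 w i); rewrite (vec_ge0_le0_eq0 h1 h) eqxx.
Qed.

Lemma root_ge0_of_coroot w i :
  nonneg_vec (coact A w (sbasis i)) -> nonneg_vec (act A w (sbasis i)).
Proof.
move=> h; case: (root_sign hG w i) => [[] //|[_ h1]].
by move: (coroot_neq0 w i); rewrite (vec_ge0_le0_eq0 h h1) eqxx.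
Qed.

Lemma coroot_of_simple w i j : act A w (sbasis i) = sbasis j -> coact A w (sbasis i) = sbasis j.
Proof.
move=> e; set c := coact A w (sbasis i).
have c_ge0 : nonneg_vec c by apply: coroot_ge0; rewrite e; exact: nonneg_sbasis.
have c'_le0 : nonpos_vec (coact A (j :: w) (sbasis i)).
  by apply: coroot_le0; rewrite /= e refl_sbasis // => l; rewrite ffunE oppr_le0 nonneg_sbasis.
have c0 l : l != j -> c l = 0.
  by move=> lj; move: (c'_le0 l) (c_ge0 l); rewrite /= coreflE -/c (negbTE lj) mulr0 subr0; lia.
have cj : c j = 1.
  have := pairing_coroot_root w i; rewrite -/c e pairing_sbasisr (sum_supported (k := j)).
    by rewrite A2; lia.
  by move=> l lj; rewrite c0 // mul0r.
by apply/ffunP => l; rewrite sbasisE; case: (eqVneq l j) => [->|lj]; rewrite ?cj ?c0.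
Qed.

Lemma coroot_unique w i w' j : act A w (sbasis i) = act A w' (sbasis j) ->
  coact A w (sbasis i) = coact A w' (sbasis j).
Proof.
move=> e; have e1 : act A (rev w' ++ w) (sbasis i) = sbasis j by rewrite act_cat e act_revK.
have := coroot_of_simple e1; rewrite coact_cat => e2.
by rewrite -(coact_revKV w' (coact A w (sbasis i)) A2) e2.
Qed.

Lemma pos_root_supported w i k : nonneg_vec (act A w (sbasis i)) ->
  (forall l, l != k -> act A w (sbasis i) l = 0) -> act A w (sbasis i) = sbasis k.
Proof.
set g := act A w (sbasis i); set c := coact A w (sbasis i) => g_ge0 g0.
have c_ge0 : nonneg_vec c := coroot_ge0 g_ge0.
have rg : refl A k g = - g.
  apply/ffunP => j; rewrite reflE !ffunE (sum_supported (k := k)) ?A2; last first.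
    by move=> l lk; rewrite g0 // mulr0.
  by case: (eqVneq j k) => [->|jk] /=; [rewrite mulr1; ring | rewrite g0 // mulr0; ring].
have c'_le0 : nonpos_vec (coact A (k :: w) (sbasis i)).
  by apply: coroot_le0; rewrite /= -/g rg => j; rewrite ffunE oppr_le0.
have c0 l : l != k -> c l = 0.
  by move=> lk; move: (c'_le0 l) (c_ge0 l); rewrite /= coreflE -/c (negbTE lk) mulr0 subr0; lia.
have p2 := pairing_coroot_root w i; rewrite -/g -/c pairingE in p2.
rewrite (sum_supported (k := k)) ?(sum_supported (k := k)) ?A2 in p2; first last.
- by move=> l lk; rewrite c0 // mul0r.
- by move=> l lk; rewrite g0 // mulr0.
have gk : g k = 1.
  move: p2 (c_ge0 k) (g_ge0 k); set x := c k; set y := g k => p2 hx hy.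
  have xy : x * y = 1 by nia.
  have y0 : y != 0 by apply/eqP => y0; rewrite y0 mulr0 in xy.
  have x0 : x != 0 by apply/eqP => x0; rewrite x0 mul0r in xy.
  nia.
by apply/ffunP => l; rewrite sbasisE; case: (eqVneq l k) => [->|lk]; rewrite ?gk ?g0.
Qed.

Lemma pos_root_support w i k : nonneg_vec (act A w (sbasis i)) -> act A w (sbasis i) <> sbasis k ->
  exists2 l, l != k & act A w (sbasis i) l != 0.
Proof.
move=> g_ge0 gk; case: (boolP [exists l, (l != k) && (act A w (sbasis i) l != 0)]).
  by case/existsP => l /andP [h1 h2]; exists l.
move/existsPn => hl; case: gk; apply: pos_root_supported => // l lk.
by move: (hl l); rewrite lk /= negbK => /eqP.
Qed.

Lemma neg_root_support w i k : nonpos_vec (act A w (sbasis i)) ->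
  act A w (sbasis i) <> - sbasis k -> exists2 l, l != k & act A w (sbasis i) l != 0.
Proof.
have e : act A (rcons w i) (sbasis i) = - act A w (sbasis i).
  by rewrite act_rcons refl_sbasis // act_oppv.
move=> g_le0 gk.
have g'_ge0 : nonneg_vec (act A (rcons w i) (sbasis i)).
  by rewrite e => j; rewrite ffunE oppr_ge0.
have : act A (rcons w i) (sbasis i) <> sbasis k by rewrite e => /eqP; rewrite eqr_oppLR => /eqP.
case/(pos_root_support g'_ge0) => l lk; rewrite e ffunE oppr_eq0 => h; by exists l.
Qed.

Lemma refl_root_sign w i k : (exists2 l, l != k & act A w (sbasis i) l != 0) ->
  (nonneg_vec (act A w (sbasis i)) -> nonneg_vec (refl A k (act A w (sbasis i)))) /\
  (nonpos_vec (act A w (sbasis i)) -> nonpos_vec (refl A k (act A w (sbasis i)))).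
Proof.
case=> l lk gl.
have rl : refl A k (act A w (sbasis i)) l = act A w (sbasis i) l.
  by rewrite reflE (negbTE lk) mulr0 subr0.
by have := root_sign hG (k :: w) i => /= -[[h _]|[h _]]; split => // gs;
  move: (h l) (gs l) gl; rewrite rl; lia.
Qed.

Lemma root_sign_vec g : is_root A g -> nonneg_vec g \/ nonpos_vec g.
Proof. by case=> w [i ->]; case: (root_sign hG w i) => -[h _]; [left | right]. Qed.

Lemma is_root_refl k g : is_root A g -> is_root A (refl A k g).
Proof. by case=> w [i ->]; exists (k :: w), i. Qed.

Lemma is_root_conj w i g : is_root A g -> is_root A (act A (conj_word w i) g).
Proof. by case=> w' [i' ->]; exists (conj_word w i ++ w'), i'; rewrite act_cat. Qed.

Lemma is_root_sbasis i : is_root A (sbasis i).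
Proof. by exists [::], i. Qed.

Lemma pos_root_sbasis i : pos_root A (sbasis i).
Proof. by split; [exact: is_root_sbasis | exact: nonneg_sbasis]. Qed.

Lemma pos_root_refl g k : pos_root A g -> g <> sbasis k -> pos_root A (refl A k g).
Proof.
case=> -[w [i eg]] gp gk; split; first by apply: is_root_refl; exists w, i.
by rewrite eg in gp gk *; case: (refl_root_sign (pos_root_support gp gk)) => h _; exact: h.
Qed.

Lemma neg_root_refl g k : neg_root A g -> g <> - sbasis k -> neg_root A (refl A k g).
Proof.
case=> -[w [i eg]] gn gk; split; first by apply: is_root_refl; exists w, i.
by rewrite eg in gn gk *; case: (refl_root_sign (neg_root_support gn gk)) => _ h; exact: h.
Qed.

Lemma pos_neg_root g : pos_root A g -> neg_root A g -> False.
Proof.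
case=> -[w [i eg]] gp [_ gn]; move: (root_neq0 w i).
by rewrite -eg (vec_ge0_le0_eq0 gp gn) eqxx.
Qed.

Lemma is_quantum_word b w0 i0 : pos_root A b -> b = act A w0 (sbasis i0) ->
  (forall g, pos_root A g -> neg_root A (act A (conj_word w0 i0) g) -> g <> b ->
     pairing A (coact A w0 (sbasis i0)) g = 1) -> is_quantum A b.
Proof.
move=> pb eb h; split => // w i e g pg ng gb.
have ec : coact A w (sbasis i) = coact A w0 (sbasis i0) by apply: coroot_unique; rewrite -e -eb.
rewrite ec; apply: h => //.
by move: ng; rewrite !act_conj_word // ec -e -eb.
Qed.

Lemma quantum_sbasis i : is_quantum A (sbasis i).
Proof.
apply: (@is_quantum_word _ [::] i (pos_root_sbasis i)) => // g pg ng gi.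
by case: (pos_neg_root _ ng); apply: pos_root_refl.
Qed.

End Roots.

Section Quantum.
Variable I : finType.
Variable A : I -> I -> int.
Hypothesis hG : is_GCM A.
Implicit Types (g : vec I) (w : seq I) (i j k l : I).
Let A2 : forall i, A i i = 2. Proof. by case: hG. Qed.

Lemma conj_word_opp_sbasis w i k g : act A (conj_word w i) g = - sbasis k ->
  g = lincomb (-1) (sbasis k) (pairing A (coact A w (sbasis i)) (sbasis k)) (act A w (sbasis i)).
Proof.
move=> e; rewrite -(act_conj_wordK A2 w i g) e act_conj_word // pairingNr.
by apply/ffunP => j; rewrite !ffunE; ring.
Qed.

(* Away from [g = alpha_k] and [s_{r_k b}(g) = -alpha_k], the quantum condition for [r_k b]
   at [g] is the one for [b] at [r_k g]. *)
Lemma quantum_pairing_refl w i k g : is_quantum A (act A w (sbasis i)) ->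
  pos_root A g -> g <> sbasis k ->
  neg_root A (act A (conj_word (k :: w) i) g) ->
  act A (conj_word (k :: w) i) g <> - sbasis k ->
  g <> act A (k :: w) (sbasis i) ->
  pairing A (coact A (k :: w) (sbasis i)) g = 1.
Proof.
move=> [_ qb] pg gk ng ne gb1.
have ng' : neg_root A (act A (conj_word w i) (refl A k g)).
  by rewrite -[act A _ _](reflK A2 k) -act_conj_word_cons; apply: neg_root_refl.
rewrite /= -[g](reflK A2 k) pairing_corefl_refl //.
apply: qb (pos_root_refl hG pg gk) ng' _ => // e.
by apply: gb1; rewrite -[g](reflK A2 k) e.
Qed.

Lemma pairing_coroot_cons w i k :
  pairing A (coact A (k :: w) (sbasis i)) (sbasis k) = - pairing A (coact A w (sbasis i)) (sbasis k).
Proof. exact: pairing_corefl_sbasis. Qed.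

Lemma quantum_cons_up w i k : is_quantum A (act A w (sbasis i)) ->
  pairing A (coact A w (sbasis i)) (sbasis k) = -1 -> is_quantum A (act A (k :: w) (sbasis i)).
Proof.
move=> qb ck; have c1k := pairing_coroot_cons w i k; rewrite ck opprK in c1k.
have c_ge0 := coroot_ge0 hG (proj2 (proj1 qb)).
have pb1 : pos_root A (act A (k :: w) (sbasis i)).
  split; first by exists (k :: w), i.
  apply: root_ge0_of_coroot => // j; rewrite /= coreflE ck mulN1r opprK.
  by apply: addr_ge0; [exact: c_ge0 | exact: ler0n].
apply: (is_quantum_word hG pb1 (erefl _)) => g pg ng gb1.
have [-> //|gk] := eqVneq g (sbasis k).
have [e|ne] := eqVneq (act A (conj_word (k :: w) i) g) (- sbasis k).
  by rewrite (conj_word_opp_sbasis e) c1k pairing_lincombr c1k pairing_coroot_root.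
exact: quantum_pairing_refl qb pg (elimN eqP gk) ng (elimN eqP ne) gb1.
Qed.

(* Test the quantum condition of [b] on [alpha_k]; [s_b(alpha_k) < 0] because [b],
   not being [alpha_k], has a positive coordinate off [k]. *)
Lemma quantum_pairing_sbasis w i k : is_quantum A (act A w (sbasis i)) ->
  0 < pairing A (coact A w (sbasis i)) (sbasis k) -> act A w (sbasis i) <> sbasis k ->
  pairing A (coact A w (sbasis i)) (sbasis k) = 1.
Proof.
move=> [[_ b_ge0] qb] p_gt0 bk.
apply: (qb w i erefl _ (pos_root_sbasis A k)); last by move=> e; apply: bk.
split; first exact/is_root_conj/is_root_sbasis.
have [l lk bl] := pos_root_support hG b_ge0 bk.
have bl_gt0 : 0 < act A w (sbasis i) l by rewrite lt0r bl b_ge0.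
case: (root_sign_vec hG (is_root_conj w i (is_root_sbasis A k))) => // h.
move: (h l); rewrite act_conj_word // !ffunE (negbTE lk) /=.
by move: p_gt0 bl_gt0; nia.
Qed.

Lemma quantum_cons_down w i k : is_quantum A (act A w (sbasis i)) ->
  pairing A (coact A w (sbasis i)) (sbasis k) = 1 -> act A w (sbasis i) <> sbasis k ->
  is_quantum A (act A (k :: w) (sbasis i)).
Proof.
move=> qb ck bk; have c1k := pairing_coroot_cons w i k; rewrite ck in c1k.
have pb1 : pos_root A (act A (k :: w) (sbasis i)) by apply: pos_root_refl => //; case: qb.
apply: (is_quantum_word hG pb1 (erefl _)) => g pg ng gb1.
have gk : g <> sbasis k.
  move=> e; rewrite e act_conj_word // c1k in ng.
  apply: (pos_neg_root hG _ ng); split; first by case: ng.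
  move=> j; rewrite lincombE opprK !mul1r.
  by apply: addr_ge0; [exact: nonneg_sbasis | exact: (proj2 pb1)].
have ne : act A (conj_word (k :: w) i) g <> - sbasis k.
  move=> e; apply: (pos_neg_root hG pg); split; first by case: pg.
  move=> j; rewrite (conj_word_opp_sbasis e) c1k lincombE !mulN1r -opprD oppr_le0.
  by apply: addr_ge0; [exact: nonneg_sbasis | exact: (proj2 pb1)].
exact: quantum_pairing_refl qb pg gk ng ne gb1.
Qed.

End Quantum.

Section QuantumCoroots.
Variable I : finType.
Variable A : I -> I -> int.
Hypothesis hG : is_GCM A.
Implicit Types (x y : vec I) (w : seq I) (i j k l : I).
Let A2 : forall i, A i i = 2. Proof. by case: hG. Qed.
Let A_le0 : forall i j, i != j -> A i j <= 0. Proof. by case: hG => _ []. Qed.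
Let A_eq0C : forall i j, A i j = 0 <-> A j i = 0. Proof. by case: hG => _ []. Qed.

Inductive qcoroot : vec I -> Prop :=
| qcoroot_sbasis i : qcoroot (sbasis i)
| qcoroot_corefl x k : qcoroot x -> pairing A x (sbasis k) = -1 -> qcoroot (corefl A k x).

Lemma qcoroot_quantum x : qcoroot x ->
  exists w i, x = coact A w (sbasis i) /\ is_quantum A (act A w (sbasis i)).
Proof.
elim=> [i|y k _ [w [i [-> qb]]] hp]; first by exists [::], i; split; last exact: quantum_sbasis.
by exists (k :: w), i; split; last exact: quantum_cons_up.
Qed.

Definition height x : int := \sum_j x j.

Lemma height_corefl k x : height (corefl A k x) = height x - pairing A x (sbasis k).
Proof.
rewrite /height; under eq_bigr => j _ do rewrite coreflE.
by rewrite sumrB (sum_mul_delta (fun=> pairing A x (sbasis k))).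
Qed.

Lemma height_ge0 x : nonneg_vec x -> 0 <= height x.
Proof. by move=> x_ge0; apply: sumr_ge0 => j _; exact: x_ge0. Qed.

Lemma exists_pairing_sbasis_gt0 w i : nonneg_vec (act A w (sbasis i)) ->
  exists k, 0 < pairing A (coact A w (sbasis i)) (sbasis k).
Proof.
move=> b_ge0; case: (boolP [exists k, 0 < pairing A (coact A w (sbasis i)) (sbasis k)]).
  by case/existsP => k; exists k.
move/existsPn => h; have := pairing_coroot_root hG w i; rewrite pairing_sum_sbasisr => e.
suff : \sum_l act A w (sbasis i) l * pairing A (coact A w (sbasis i)) (sbasis l) <= 0 by rewrite e.
by apply: sumr_le0 => l _; apply: mulr_ge0_le0; [exact: b_ge0 | rewrite leNgt h].
Qed.

(* Descend along [r_k] with [<b^v, alpha_k> > 0]: by [quantum_pairing_sbasis] this pairing is 1,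
   so the height of [b^v] drops by one while quantumness is kept. *)
Lemma quantum_qcoroot w i : is_quantum A (act A w (sbasis i)) -> qcoroot (coact A w (sbasis i)).
Proof.
have [n] := ubnP (absz (height (coact A w (sbasis i)))).
elim: n w i => // n IH w i lt_n qb; have b_ge0 := proj2 (proj1 qb).
case: (boolP [exists l, act A w (sbasis i) == sbasis l]).
  by case/existsP => l /eqP e; rewrite (coroot_of_simple hG e); exact: qcoroot_sbasis.
move/existsPn => nsimple; have [k pk] := exists_pairing_sbasis_gt0 b_ge0.
have bk : act A w (sbasis i) <> sbasis k by move=> e; move: (nsimple k); rewrite e eqxx.
have ck := quantum_pairing_sbasis hG qb pk bk.
have qb1 := quantum_cons_down hG qb ck bk.
have h1 : height (coact A (k :: w) (sbasis i)) = height (coact A w (sbasis i)) - 1.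
  by rewrite /= height_corefl ck.
have h1_ge0 := height_ge0 (coroot_ge0 hG (proj2 (proj1 qb1))).
rewrite -[coact A w _](coreflK k A2); apply: qcoroot_corefl.
  by apply: IH qb1; move: lt_n h1_ge0; rewrite h1; lia.
by rewrite pairing_coroot_cons // ck.
Qed.

Lemma qcoroot_ge0 x : qcoroot x -> nonneg_vec x.
Proof.
elim=> [i|y k _ IH hp] j; first exact: nonneg_sbasis.
by rewrite coreflE hp mulN1r opprK addr_ge0.
Qed.

Lemma corefl_pairingN1 x k : pairing A x (sbasis k) = -1 ->
  forall j, corefl A k x j = x j + (j == k)%:R.
Proof. by move=> hp j; rewrite coreflE hp mulN1r opprK. Qed.

(* Induction on the chain [x = r_k y]: either the last step [r_k] raises [x_k] to [>= 2], or
   [y_k = 0] and the step [r_k'] found for [y] commutes with [r_k], because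
   [-1 = <y, alpha_k> <= y_k' a_{k',k}] with [y_k' >= 2] forces [a_{k',k} = 0]. *)
Lemma qcoroot_peel x : qcoroot x -> (exists k, 2 <= x k) ->
  exists k, [/\ 2 <= x k, pairing A x (sbasis k) = 1 & qcoroot (corefl A k x)].
Proof.
elim=> [i [k]|y k qy IH yk [k0 hk0]]; first by rewrite sbasisE; case: (k == i).
have y_ge0 := qcoroot_ge0 qy; have ex := corefl_pairingN1 yk.
case: (lerP 2 (corefl A k y k)) => hk.
  exists k; split => //; last by rewrite coreflK.
  by rewrite pairing_corefl_sbasis // yk opprK.
have yk0 : y k = 0 by move: hk (y_ge0 k); rewrite ex eqxx; lia.
have k0k : k0 != k by apply/eqP => e; move: hk0 hk; rewrite e; lia.
have hy0 : 2 <= y k0 by move: hk0; rewrite ex (negbTE k0k) addr0.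
have [k1 [hk1 p1 q1]] := IH (ex_intro _ k0 hy0).
have k1k : k1 != k by apply/eqP => e; move: hk1; rewrite e yk0.
have Ak1k : A k1 k = 0.
  have : \sum_l y l * A l k <= y k1 * A k1 k.
    rewrite (bigD1 k1) //= gerDl; apply: sumr_le0 => l _.
    case: (eqVneq l k) => [->|lk]; first by rewrite yk0 mul0r.
    by apply: mulr_ge0_le0; [exact: y_ge0 | exact: A_le0].
  by rewrite -pairing_sbasisr yk; have := A_le0 k1k; nia.
have Akk1 : A k k1 = 0 by apply/A_eq0C.
exists k1; split.
- by rewrite ex (negbTE k1k) addr0.
- by rewrite pairing_corefl p1 yk Akk1; ring.
- rewrite corefl_comm //; apply: qcoroot_corefl => //.
  by rewrite pairing_corefl p1 yk Ak1k; ring.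
Qed.

Definition merge x x' : vec I := [ffun j => x j + x' j - ((1 <= x j)%R : nat)%:R].

Lemma pairing_merge_sbasis x x' k : nonneg_vec x' -> (forall j, (1 <= x j) = (1 <= x' j)) ->
  (forall l, 2 <= x' l -> A l k = 0) ->
  pairing A (merge x x') (sbasis k) = pairing A x (sbasis k).
Proof.
move=> x'_ge0 h1 h2; rewrite !pairing_sbasisr.
rewrite (eq_bigr (fun l => x l * A l k + (x' l - ((1 <= x' l)%R : nat)%:R) * A l k)).
  rewrite big_split /= [X in _ + X]big1 ?addr0 // => l _.
  case: (lerP 2 (x' l)) => hl; first by rewrite h2 // mulr0.
  by have := x'_ge0 l; case: (lerP 1 (x' l)) => /= h' ?; [have -> : x' l = 1 by lia | have -> : x' l = 0 by lia]; rewrite subrr mul0r.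
by move=> l _; rewrite ffunE h1; ring.
Qed.

Lemma qcoroot_merge x x' : qcoroot x -> qcoroot x' ->
  (forall j, (1 <= x j) = (1 <= x' j)) ->
  (forall j, ~~ ((2 <= x j) && (2 <= x' j))) ->
  (forall a b, 2 <= x a -> 2 <= x' b -> A a b = 0) ->
  qcoroot (merge x x').
Proof.
have [n] := ubnP (absz (height x)); elim: n x => // n IH x lt_n qx qx' h1 h2 h3.
have x_ge0 := qcoroot_ge0 qx; have x'_ge0 := qcoroot_ge0 qx'.
case: (boolP [exists k, 2 <= x k]); last first.
  move/existsPn => hx; suff -> : merge x x' = x' by [].
  by apply/ffunP => j; rewrite ffunE; move: (hx j) (x_ge0 j); rewrite -ltNge;
    case: (lerP 1 (x j)) => /= h; lia.
case/existsP => k0 hk0; have [k [hk pk q0]] := qcoroot_peel qx (ex_intro _ k0 hk0).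
set x0 := corefl A k x in q0.
have ex0 j : x0 j = x j - (j == k)%:R by rewrite coreflE pk mul1r.
have h10 j : (1 <= x0 j) = (1 <= x' j).
  by rewrite -h1 ex0; case: (eqVneq j k) => [->|jk] /=; [apply/idP/idP; lia | rewrite subr0].
have h20 j : ~~ ((2 <= x0 j) && (2 <= x' j)).
  apply: contra (h2 j); rewrite ex0 => /andP [a ->]; rewrite andbT.
  by case: (j == k) a => /=; lia.
have h30 a b : 2 <= x0 a -> 2 <= x' b -> A a b = 0.
  by move=> ha; apply: h3; move: ha; rewrite ex0; case: (a == k) => /=; lia.
have hx0 : (absz (height x0) < n)%N.
  by have := height_ge0 (qcoroot_ge0 q0); rewrite /x0 height_corefl pk; move: lt_n; lia.
have q1 := IH x0 hx0 q0 qx' h10 h20 h30.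
have p1 : pairing A (merge x0 x') (sbasis k) = -1.
  rewrite pairing_merge_sbasis // => [|l hl]; first by rewrite pairing_corefl_sbasis // pk.
  by apply/A_eq0C; apply: h3.
suff -> : merge x x' = corefl A k (merge x0 x') by exact: qcoroot_corefl.
apply/ffunP => j; rewrite corefl_pairingN1 // !ffunE pk mul1r.
case: (eqVneq j k) => [->|jk] /=; last by rewrite !subr0 ?addr0.
have [-> ->] : (1 <= x k) = true /\ (1 <= x k - 1) = true by split; apply/idP; lia.
by ring.
Qed.

End QuantumCoroots.

Lemma sum_sbasis_in (I : finType) (S : {set I}) (j : I) :
  \sum_(i in S) sbasis i j = ((j \in S) : nat)%:R.
Proof.
under eq_bigr => i _ do rewrite sbasisE.
case: (boolP (j \in S)) => hj.
  rewrite (bigD1 j) //= eqxx big1 ?addr0 // => i /andP [_ ij].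
  by rewrite eq_sym (negbTE ij).
by rewrite big1 // => i iS; case: (eqVneq j i) => // e; move: hj; rewrite e iS.
Qed.

Lemma merge_In_set (I : finType) (x x' : vec I) :
  merge x x' = [ffun j => x j + x' j - \sum_(i in In_set 1 x) sbasis i j].
Proof. by apply/ffunP => j; rewrite !ffunE sum_sbasis_in inE. Qed.

Lemma In_set_merge (I : finType) (x x' : vec I) n :
  (forall j, (1 <= x j) = (1 <= x' j)) -> (forall j, ~~ ((2 <= x j) && (2 <= x' j))) ->
  (1 <= n)%N -> In_set n (merge x x') = In_set n x :|: In_set n x'.
Proof.
move=> h1 h2 hn; apply/setP => j; rewrite !inE ffunE.
move: (h1 j) (h2 j); case: (lerP 1 (x j)) => /= hx; case: (lerP 1 (x' j)) => //= hx' _.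
  by rewrite negb_and -!ltNge => h; lia.
by move=> _; lia.
Qed.

Theorem lemma2p27 (I : finType) (A : I -> I -> int) (hA : is_GCM A)
  (b b' c c' : vec I) :
  is_quantum A b -> is_quantum A b' ->
  coroot_of A b c -> coroot_of A b' c' ->
  In_set 1 c = In_set 1 c' ->
  In_set 2 c :&: In_set 2 c' = set0 ->
  (forall i i', i \in In_set 2 c -> i' \in In_set 2 c' -> A i i' = 0) ->
  exists b'' c'' : vec I,
    [/\ is_quantum A b'', coroot_of A b'' c'',
        c'' = [ffun j => c j + c' j - \sum_(i in In_set 1 c) sbasis i j]
      & forall n : nat, (1 <= n)%N ->
          In_set n c'' = In_set n c :|: In_set n c'].
Proof.
move=> qb qb' [w [i [eb ec]]] [w' [i' [eb' ec']]] h1 h2 h3.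
have qc : qcoroot A c by rewrite ec; apply: quantum_qcoroot; rewrite -?eb.
have qc' : qcoroot A c' by rewrite ec'; apply: quantum_qcoroot; rewrite -?eb'.
have h1j j : (1 <= c j) = (1 <= c' j) by move/setP: h1 => /(_ j); rewrite !inE.
have h2j j : ~~ ((2 <= c j) && (2 <= c' j)) by move/setP: h2 => /(_ j); rewrite !inE => ->.
have h3j a a' : 2 <= c a -> 2 <= c' a' -> A a a' = 0 by move=> ha ha'; apply: h3; rewrite inE.
have [w'' [i'' [e'' q'']]] := qcoroot_quantum hA (qcoroot_merge hA qc qc' h1j h2j h3j).
exists (act A w'' (sbasis i'')), (coact A w'' (sbasis i'')); split => //.
- by exists w'', i''.
- by rewrite -e'' merge_In_set.
- by move=> n hn; rewrite -e'' In_set_merge.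
Qed.
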